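(* In the 1-sided False Positive regime, when the realized subgraph may contain cycles, any algorithm requires $\Omega(m\log m)$ queries in the worst case (over moldgraphs with $m$ edges and such realized subgraphs) to discover a realized spanning tree with constant failure probability.
   Context: Problem (graph connectivity with noisy queries): a graph $G=(V,E)$ (possibly with parallel edges), the moldgraph, with $m$ edges is given. An adversary selects an arbitrary connected spanning subgraph of $G$ to be realized. The algorithm may query an oracle on any edge $e$ (``Is $e$ realized?''), receiving ``Yes''/``No''; each query costs $1$; answers to distinct queries (including repeated queries of the same edge) are independent. Goal: output a spanning tree of $G$ all of whose edges are realized. In the 1-sided False Positive regime: for a realized edge the answer is always ``Yes''; for a non-realized edge the answer is ``Yes'' with a constant probability $p<1/2$ and ``No'' with probability $1-p$. *)

From mathcomp Require Import all_boot.
From Stdlib Require Import Reals.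

Set Implicit Arguments.
Unset Strict Implicit.
Unset Printing Implicit Defensive.

Section Graph.
Variables (V E : finType) (ends : E -> V * V).

Definition adj (S : {set E}) : rel V :=
  fun u v => [exists e in S, (ends e == (u, v)) || (ends e == (v, u))].

Definition connectedS (S : {set E}) : bool :=
  [forall u, forall v, connect (adj S) u v].

(** (V, S) is a spanning tree: connected and acyclic, the latter expressed as
    "every edge of S is a bridge" (minimally connected; loops are never bridges). *)
Definition spanning_tree (S : {set E}) : bool :=
  connectedS S && [forall e in S, ~~ connectedS (S :\ e)].

Definition admissible_realization (Rz : {set E}) : bool := connectedS Rz.
End Graph.

(** * Randomized adaptive query algorithms
    A (randomized, adaptive) algorithm is a finite decision tree whose nodes are
    - [Out S]        : stop and output the edge set S,
    - [Coin q a b]   : internal randomness: continue with [a] w.p. q, else [b]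
                       (q is clamped into [0,1]),
    - [Query e a b]  : query edge e (cost 1); continue with [a] on "Yes",
                       with [b] on "No".
   Since the graph is finite, every randomized algorithm with bounded number of
   queries is a finitely supported mixture of deterministic decision trees and
   can thus be written in this form. *)
Inductive alg (E : finType) : Type :=
| Out of {set E}
| Coin of R & alg E & alg E
| Query of E & alg E & alg E.

Definition clamp01 (q : R) : R := Rmin 1 (Rmax 0 q).

(** Probability that the algorithm outputs a spanning tree of the moldgraph all
    of whose edges are realized, when the realized edge set is [Rz] and the
    oracle is 1-sided false positive with parameter [p]:
    a realized edge always answers "Yes"; a non-realized edge answers "Yes"
    w.p. [p] and "No" w.p. [1-p]; answers to distinct queries (including
    repetitions of the same edge) are independent. *)
Fixpoint success_prob (V E : finType) (ends : E -> V * V) (p : R)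
    (Rz : {set E}) (A : alg E) : R :=
  match A with
  | Out T0 => if spanning_tree ends T0 && (T0 \subset Rz) then 1%R else 0%R
  | Coin q a b => (clamp01 q * success_prob ends p Rz a
                   + (1 - clamp01 q) * success_prob ends p Rz b)%R
  | Query e a b =>
      if e \in Rz then success_prob ends p Rz a
      else (p * success_prob ends p Rz a + (1 - p) * success_prob ends p Rz b)%R
  end.

(** Worst-case number of queries made by the algorithm on realized set [Rz]:
    the maximum number of queries along an execution path that has positive
    probability (for 0 < p < 1). *)
Fixpoint query_cost (E : finType) (Rz : {set E}) (A : alg E) : nat :=
  match A with
  | Out _ => 0
  | Coin q a b =>
      if Rle_dec (clamp01 q) 0 then query_cost Rz b
      else if Rle_dec 1 (clamp01 q) then query_cost Rz a
      else maxn (query_cost Rz a) (query_cost Rz b)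
  | Query e a b =>
      (if e \in Rz then query_cost Rz a
       else maxn (query_cost Rz a) (query_cost Rz b)).+1
  end.

(* The hard moldgraphs are paths whose edges are all doubled; the adversary
   removes at most one copy of each doubled edge, and a realized spanning tree
   has to pick a present copy on every rung.  Give the three states of a rung
   (copy false missing, copy true missing, both present) weights x, y, z and
   consider the success probability of the algorithm averaged with the
   product weights.  With g(t) = t for t <= 1 and g(t) = 1 + ln t beyond, the
   rung potential x + y + z - th z min (g (x / th z)) (g (y / th z)) bounds
   the success of an output (at most z + max x y per rung) and grows by a
   factor at most 1 + th (1 - ln p) per query: the answer "No" settles the
   rung, the answer "Yes" multiplies the weight of the queried copy being
   missing by p, which lowers g by at most 1 - ln p.  For the weights
   (1/4, 1/4, 1/2) and th = 1/2n each rung starts at 1 - (1 + ln n)/4n, so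
   after d queries the success is at most exp (d (1 - ln p)/2n - (1 + ln n)/4),
   which stays below 1/2 unless d = Omega (n ln n). *)

From Stdlib Require Import Reals.
From mathcomp Require Import all_boot all_order all_algebra.
From mathcomp Require Import Rstruct lra ring.
Import Order.TTheory GRing.Theory Num.Theory.

(* Restore the meanings of the keys %N and %R used in the statement of
   [lemma8], which the imports above rebind. *)
Delimit Scope nat_scope with N.
Delimit Scope R_scope with R.

Set Implicit Arguments.
Unset Strict Implicit.
Unset Printing Implicit Defensive.

Section Moldgraph.
Variables (V E : finType) (ends : E -> V * V).

Lemma adj_sym (S : {set E}) : symmetric (adj ends S).
Proof. by move=> u v; apply/existsP/existsP => -[e]; exists e; rewrite orbC. Qed.

Lemma connectedS_setD1 (S : {set E}) (e f : E) :
  f \in S -> f != e -> ends f = ends e -> connectedS ends S -> connectedS ends (S :\ e).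
Proof.
move=> fS fe ends_fe /forallP conn; apply/forallP => u; apply/forallP => v.
apply: connect_sub (forallP (conn u) v) => x y /existsP[g /andP[gS g_xy]].
apply/connect1/existsP; case: (eqVneq g e) g_xy => [-> e_xy|ge g_xy].
  by exists f; rewrite !inE fe fS ends_fe.
by exists g; rewrite !inE ge gS.
Qed.

End Moldgraph.

Section DoubledPath.
Variables (n r : nat).

(* The path 0 - 1 - ... - n with every edge doubled (copies [false] and
   [true]), plus [r] loops at 0 that only pad the number of edges. *)
Definition dpathV : finType := 'I_n.+1.
Definition dpathE : finType := ('I_n * bool + 'I_r)%type.

Definition dpath_ends (e : dpathE) : dpathV * dpathV :=
  if e is inl (i, _) then (inord i, inord i.+1) else (ord0, ord0).

Lemma card_dpathE : #|dpathE| = n.*2 + r.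
Proof. by rewrite card_sum card_prod !card_ord card_bool muln2. Qed.

(* [s i = Some b]: copy [b] of the [i]-th edge is missing; [None]: both are present. *)
Definition realized (s : {ffun 'I_n -> option bool}) : {set dpathE} :=
  [set e | if e is inl (i, b) then s i != Some b else true].

Lemma dpath_connected (S : {set dpathE}) :
  (forall i : 'I_n, exists b, inl (i, b) \in S) -> connectedS dpath_ends S.
Proof.
move=> rungs; pose path := connect (adj dpath_ends S).
have reach_inord k : k <= n -> path ord0 (inord k).
  elim: k => [_|k IH k_lt].
    have -> : inord 0 = ord0 :> dpathV by apply: val_inj; rewrite /= inordK.
    exact: connect0.
  apply: connect_trans (IH (ltnW k_lt)) (connect1 _).
  have [b bS] := rungs (Ordinal k_lt).
  by apply/existsP; exists (inl (Ordinal k_lt, b)); rewrite bS eqxx.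
have reach (v : dpathV) : path ord0 v by rewrite -(inord_val v) reach_inord // -ltnS.
apply/forallP => u; apply/forallP => v.
by apply: connect_trans (reach v); rewrite (sym_connect_sym (@adj_sym _ _ _ S)).
Qed.

Lemma realized_admissible s : admissible_realization dpath_ends (realized s).
Proof.
apply: dpath_connected => i; exists (if s i is Some b then ~~ b else false).
by rewrite inE; case: (s i) => // -[].
Qed.

Lemma dpath_cut_closed (S : {set dpathE}) (i : 'I_n) :
  (forall b, inl (i, b) \notin S) -> closed (adj dpath_ends S) [pred v : dpathV | v <= i].
Proof.
move=> iS x y /existsP[[[j b]|z] /andP[jS /orP ends_xy]]; last by case: ends_xy => /eqP[<- <-].
have ji : (j : nat) != i by apply: contraTneq jS => /val_inj ->.
have j_lt : j < n.+1 by rewrite ltnS ltnW.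
have j1_lt : j.+1 < n.+1 by rewrite ltnS.
by case: ends_xy => /eqP[<- <-]; rewrite !inE !inordK // [j <= i]leq_eqVlt (negbTE ji).
Qed.

Lemma spanning_tree_rung (T : {set dpathE}) (i : 'I_n) :
  spanning_tree dpath_ends T -> (inl (i, false) \in T) != (inl (i, true) \in T).
Proof.
case/andP=> conn bridges.
case fT: (inl (i, false) \in T); case tT: (inl (i, true) \in T) => //=.
  move/forall_inP: bridges => /(_ _ fT).
  by rewrite (connectedS_setD1 tT _ _ conn) //; apply/eqP => -[].
have iT b : inl (i, b) \notin T by case: b; rewrite ?fT ?tT.
have := closed_connect (dpath_cut_closed iT) (forallP (forallP conn ord0) ord_max).
by rewrite !inE leq0n leqNgt ltn_ord.
Qed.

Lemma spanning_tree_realized (T : {set dpathE}) s (i : 'I_n) :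
  spanning_tree dpath_ends T -> T \subset realized s ->
  s i != Some (inl (i, true) \in T).
Proof.
move=> tree /subsetP sub.
have copyT : inl (i, inl (i, true) \in T) \in T.
  case tT: (inl (i, true) \in T) => //.
  by have := spanning_tree_rung i tree; rewrite tT; case: (_ \in T).
by have := sub _ copyT; rewrite inE.
Qed.

End DoubledPath.

Local Open Scope ring_scope.
Local Bind Scope ring_scope with R.
Local Arguments ln _%_ring_scope.
Local Arguments exp _%_ring_scope.

Lemma IZR_natE (k : nat) : IZR (Z.of_nat k) = k%:R.
Proof. by rewrite -INR_IZR_INZ INRE. Qed.

Lemma lnM (x y : R) : 0 < x -> 0 < y -> ln (x * y) = ln x + ln y.
Proof. by move=> /RltP x_gt0 /RltP y_gt0; exact: ln_mult. Qed.

Lemma ln1 : ln 1 = 0.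
Proof. exact: ln_1. Qed.

Lemma lnX (x : R) (k : nat) : 0 < x -> ln (x ^+ k) = k%:R * ln x.
Proof.
move=> x_gt0; elim: k => [|k IH]; first by rewrite expr0 mul0r ln1.
by rewrite exprS lnM ?exprn_gt0 // IH -addn1 natrD mulrDl mul1r addrC.
Qed.

Lemma ln_le (x y : R) : 0 < x -> x <= y -> ln x <= ln y.
Proof.
move=> x_gt0; rewrite le_eqVlt => /predU1P[-> //|x_lt_y].
by apply/ltW/RltP; apply: ln_increasing; apply/RltP.
Qed.

Lemma ln_le0 (x : R) : 0 < x -> x <= 1 -> ln x <= 0.
Proof. by move=> x_gt0 /(ln_le x_gt0); rewrite ln1. Qed.

Lemma ln_ge0 (x : R) : 1 <= x -> 0 <= ln x.
Proof. by move/(ln_le ltr01); rewrite ln1. Qed.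

Lemma ln_lt0 (x : R) : 0 < x -> x < 1 -> ln x < 0.
Proof.
move=> /RltP x_gt0 /RltP x_lt1; apply/RltP.
by have := ln_increasing _ _ x_gt0 x_lt1; rewrite ln1.
Qed.

Lemma exp_ge1D (x : R) : 1 + x <= exp x.
Proof. by apply/RleP; exact: exp_ineq1_le. Qed.

Lemma ln_le_sub1 (x : R) : 0 < x -> ln x <= x - 1.
Proof.
move=> /RltP x_gt0; have := exp_ge1D (ln x).
by rewrite (_ : exp (ln x) = x) ?exp_ln //; lra.
Qed.

Lemma powD1_le_exp (x : R) (k : nat) : -1 <= x -> (1 + x) ^+ k <= exp (x * k%:R).
Proof.
move=> x_ge; rewrite mulr_natr -expRX.
apply: lerXn2r; rewrite ?nnegrE ?exp_ge1D //; last exact/ltW/RltP/exp_pos.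
lra.
Qed.

Lemma exp_lt_half (x : R) : x < -1 -> exp x < 2^-1.
Proof.
move=> x_lt; have e_gt0 : 0 < exp x by apply/RltP; exact: exp_pos.
have e_inv : exp x * exp (- x) = 1 by rewrite expRD RplusE subrr expR0.
have := ler_wpM2l (ltW e_gt0) (exp_ge1D (- x)).
have : 0 < exp x * (- 1 - x) by rewrite mulr_gt0 // subr_gt0.
move: e_inv; set f := exp (- x); lra.
Qed.

Definition logcap (x : R) : R := if x <= 1 then x else 1 + ln x.

Lemma logcap_le (x : R) : logcap x <= x.
Proof.
rewrite /logcap; case: ifP => [_|/negbT]; rewrite ?lexx // -ltNge => x_gt1.
by have := ln_le_sub1 (lt_trans ltr01 x_gt1); lra.
Qed.

Lemma logcap_shrink (p x : R) : 0 < p -> p < 1 -> 0 <= x ->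
  logcap x - logcap (p * x) <= 1 - ln p.
Proof.
move=> p_gt0 p_lt1 x_ge0; have lnp_lt0 := ln_lt0 p_gt0 p_lt1.
rewrite /logcap; case: ifP => [x_le1|/negbT]; first by case: ifP; nra.
rewrite -ltNge => x_gt1; have px_gt0 : 0 < p * x by nra.
rewrite (lnM p_gt0 (lt_trans ltr01 x_gt1)); case: ifP => [px_le1|_]; last by lra.
have := ln_le0 px_gt0 px_le1; rewrite (lnM p_gt0 (lt_trans ltr01 x_gt1)); nra.
Qed.

Section Potential.
Variable th : R.
Hypothesis th_gt0 : 0 < th.

Definition potential (x y z : R) : R :=
  x + y + z - th * z * Num.min (logcap (x / (th * z))) (logcap (y / (th * z))).

Lemma potentialC (x y z : R) : potential x y z = potential y x z.
Proof. by rewrite /potential minC (addrC x). Qed.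

Lemma potential_base0 (x y : R) : potential x y 0 = x + y.
Proof. by rewrite /potential mulr0 mul0r addr0 subr0. Qed.

Lemma scaled_logcap_le (x z : R) : 0 <= x -> 0 <= z ->
  th * z * logcap (x / (th * z)) <= x.
Proof.
move=> x_ge0; rewrite le_eqVlt => /predU1P[<-|z_gt0]; first by rewrite mulr0 mul0r.
have tz_gt0 : 0 < th * z by rewrite mulr_gt0.
apply: le_trans (ler_wpM2l (ltW tz_gt0) (logcap_le _)) _.
by rewrite mulrC divfK ?gt_eqF.
Qed.

Lemma potential_ge (x y z : R) : 0 <= x -> 0 <= y -> 0 <= z ->
  z + y <= potential x y z.
Proof.
move=> x_ge0 y_ge0 z_ge0; have tz_ge0 : 0 <= th * z by rewrite mulr_ge0 // ltW.
rewrite /potential; have := scaled_logcap_le x_ge0 z_ge0.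
set gx := logcap _; set gy := logcap _.
have : Num.min gx gy <= gx by rewrite ge_min lexx.
move/(ler_wpM2l tz_ge0); lra.
Qed.

Lemma potential_query (p x y z : R) : 0 < p -> p < 1 ->
  0 <= x -> 0 <= y -> 0 <= z ->
  potential (p * x) y z + (1 - p) * x <= (1 + th * (1 - ln p)) * potential x y z.
Proof.
move=> p_gt0 p_lt1 x_ge0 y_ge0 z_ge0.
have tz_ge0 : 0 <= th * z by rewrite mulr_ge0 // ltW.
have c_ge0 : 0 <= 1 - ln p by have := ln_lt0 p_gt0 p_lt1; lra.
have thc_ge0 : 0 <= th * (1 - ln p) := mulr_ge0 (ltW th_gt0) c_ge0.
have z_le : z <= potential x y z by have := potential_ge x_ge0 y_ge0 z_ge0; lra.
have shrink := logcap_shrink p_gt0 p_lt1 (divr_ge0 x_ge0 tz_ge0).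
move: (ler_wpM2l thc_ge0 z_le) shrink; rewrite /potential -[p * x / _]mulrA.
set u := x / (th * z); set g := logcap (y / (th * z)).
have min_shrink : logcap u - logcap (p * u) <= 1 - ln p ->
    th * z * Num.min (logcap u) g - th * z * (1 - ln p)
    <= th * z * Num.min (logcap (p * u)) g.
  move=> shrink; rewrite -mulrBr; apply: ler_wpM2l => //.
  have min_le_u : Num.min (logcap u) g <= logcap u by rewrite ge_min lexx.
  have min_le_g : Num.min (logcap u) g <= g by rewrite ge_min lexx orbT.
  by rewrite le_min; apply/andP; split; lra.
move=> z_le_pot /min_shrink; lra.
Qed.

End Potential.

Lemma potential_uniform (N : R) : 1 < N ->
  potential (2 * N)^-1 4^-1 4^-1 2^-1 = 1 - (1 + ln N) / (4 * N).
Proof.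
move=> N_gt1; have N_neq0 : N != 0 by rewrite gt_eqF // (lt_trans ltr01).
rewrite /potential minxx (_ : 4^-1 / ((2 * N)^-1 * 2^-1) = N); last by field.
by rewrite /logcap leNgt N_gt1 /=; field.
Qed.

Lemma clamp01_ge0 (q : R) : 0 <= clamp01 q.
Proof. by apply/RleP; apply: Rmin_glb; [apply: Rle_0_1 | apply: Rmax_l]. Qed.

Lemma clamp01_le1 (q : R) : clamp01 q <= 1.
Proof. by apply/RleP; apply: Rmin_l. Qed.

Lemma convex_comb_le (q x y B : R) : 0 <= q -> q <= 1 ->
  (0 < q -> x <= B) -> (q < 1 -> y <= B) -> q * x + (1 - q) * y <= B.
Proof.
rewrite le_eqVlt => /predU1P[<- _ _ /(_ ltr01)|q_gt0]; first lra.
rewrite le_eqVlt => /predU1P[-> /(_ ltr01) ? _|q_lt1 /(_ q_gt0) ? /(_ q_lt1) ?]; first lra.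
nra.
Qed.

Section QueryCost.
Variables (E : finType) (Rz : {set E}) (a c : alg E).

Lemma query_cost_coinl q : 0 < clamp01 q -> (query_cost Rz a <= query_cost Rz (Coin q a c))%N.
Proof.
move=> /RltP q_gt0 /=; case: (Rle_dec (clamp01 q) 0%R) => [q_le0|_] /=.
  by case: (Rlt_not_le _ _ q_gt0 q_le0).
by case: (Rle_dec 1%R (clamp01 q)) => //= _; exact: leq_maxl.
Qed.

Lemma query_cost_coinr q : clamp01 q < 1 -> (query_cost Rz c <= query_cost Rz (Coin q a c))%N.
Proof.
move=> /RltP q_lt1 /=; case: (Rle_dec (clamp01 q) 0%R) => //= _.
case: (Rle_dec 1%R (clamp01 q)) => [q_ge1|_] /=; last exact: leq_maxr.
by case: (Rlt_not_le _ _ q_lt1 q_ge1).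
Qed.

Lemma query_cost_queryl e : (query_cost Rz a < query_cost Rz (Query e a c))%N.
Proof. by rewrite /= ltnS; case: ifP => // _; exact: leq_maxl. Qed.

Lemma query_cost_queryr e : e \notin Rz -> (query_cost Rz c < query_cost Rz (Query e a c))%N.
Proof. by move=> /negbTE /= ->; rewrite ltnS leq_maxr. Qed.

End QueryCost.

Lemma sum_option (F : option bool -> R) :
  \sum_o F o = F None + F (Some false) + F (Some true).
Proof.
rewrite (bigD1 None) //= (bigD1 (Some false)) //= (bigD1 (Some true)) //= big1.
  by rewrite addr0 addrA.
by case=> [[]|].
Qed.

Section WeightedSuccess.
Variables (n r : nat) (p th : R).
Hypotheses (p_gt0 : 0 < p) (p_lt1 : p < 1) (th_gt0 : 0 < th).

Local Notation state := {ffun 'I_n -> option bool}.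
Local Notation weights := ('I_n -> option bool -> R).

Definition mass (h : weights) (s : state) : R := \prod_(i < n) h i (s i).

Definition wsuccess (A : alg (dpathE n r)) (h : weights) : R :=
  \sum_(s : state) mass h s * success_prob (@dpath_ends n r) p (realized r s) A.

Definition rung_potential (h : weights) (i : 'I_n) : R :=
  potential th (h i (Some false)) (h i (Some true)) (h i None).

Definition rescale (h : weights) (i : 'I_n) (k : option bool -> R) : weights :=
  fun j o => if j == i then k o * h j o else h j o.

Definition pr_yes (b : bool) (o : option bool) : R := if o == Some b then p else 1.
Definition pr_no (b : bool) (o : option bool) : R := if o == Some b then 1 - p else 0.

Lemma mass_rescale h i k s : mass (rescale h i k) s = mass h s * k (s i).
Proof.
rewrite /mass (bigD1 i) //= [in RHS](bigD1 i) //= {1}/rescale eqxx.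
rewrite (eq_bigr (fun j => h j (s j))) => [|j /negbTE ji]; last by rewrite /rescale ji.
by ring.
Qed.

Lemma mass_rescale_neq0 h i k s :
  mass (rescale h i k) s != 0 -> mass h s != 0 /\ k (s i) != 0.
Proof. by rewrite mass_rescale mulf_eq0 negb_or => /andP. Qed.

Lemma rescale_ge0 h i k : (forall j o, 0 <= h j o) -> (forall o, 0 <= k o) ->
  forall j o, 0 <= rescale h i k j o.
Proof. by move=> h_ge0 k_ge0 j o; rewrite /rescale; case: eqP; rewrite ?mulr_ge0. Qed.

Lemma rung_potential_ge h i b : (forall j o, 0 <= h j o) ->
  h i None + h i (Some b) <= rung_potential h i.
Proof.
move=> h_ge0; rewrite /rung_potential; case: b; first exact: potential_ge.
by rewrite potentialC; apply: potential_ge.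
Qed.

Lemma rung_potential_ge0 h i : (forall j o, 0 <= h j o) -> 0 <= rung_potential h i.
Proof.
by move=> h_ge0; apply: le_trans (rung_potential_ge i false h_ge0); rewrite addr_ge0.
Qed.

Lemma prod_rung_potential_ge0 h : (forall j o, 0 <= h j o) ->
  0 <= \prod_(i < n) rung_potential h i.
Proof. by move=> h_ge0; apply: prodr_ge0 => i _; apply: rung_potential_ge0. Qed.

Lemma rung_potential_query h i b : (forall j o, 0 <= h j o) ->
  rung_potential (rescale h i (pr_yes b)) i + rung_potential (rescale h i (pr_no b)) i
  <= (1 + th * (1 - ln p)) * rung_potential h i.
Proof.
move=> h_ge0; rewrite /rung_potential /rescale eqxx /pr_yes /pr_no.
case: b => /=; rewrite !mul1r !mul0r potential_base0 ?add0r ?addr0.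
  rewrite !(potentialC _ (h i (Some false))).
  by apply: (potential_query th_gt0 p_gt0 p_lt1); exact: h_ge0.
by apply: (potential_query th_gt0 p_gt0 p_lt1); exact: h_ge0.
Qed.

Lemma prod_rung_potential_query h i b : (forall j o, 0 <= h j o) ->
  \prod_(j < n) rung_potential (rescale h i (pr_yes b)) j
  + \prod_(j < n) rung_potential (rescale h i (pr_no b)) j
  <= (1 + th * (1 - ln p)) * \prod_(j < n) rung_potential h j.
Proof.
move=> h_ge0.
have others k : \prod_(j < n | j != i) rung_potential (rescale h i k) j
              = \prod_(j < n | j != i) rung_potential h j.
  by apply: eq_bigr => j /negbTE ji; rewrite /rung_potential /rescale ji.
rewrite !(bigD1 i isT) /= !others -mulrDl mulrA.
apply: ler_wpM2r; last exact: rung_potential_query.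
by apply: prodr_ge0 => j _; apply: rung_potential_ge0.
Qed.

Lemma wsuccess_out h T : (forall j o, 0 <= h j o) ->
  wsuccess (Out T) h <= \prod_(i < n) rung_potential h i.
Proof.
move=> h_ge0; rewrite /wsuccess /=.
have [tree|_] := boolP (spanning_tree (@dpath_ends n r) T); last first.
  rewrite big1 => [|s _]; last by rewrite mulr0.
  exact: prod_rung_potential_ge0.
pose copy i := inl (i, true) \in T.
apply: (@le_trans _ _ (\sum_(s : state) \prod_(i < n) (h i (s i) * (s i != Some (copy i))%:R))).
  apply: ler_sum => s _ /=; case: ifP => [sub|_].
    rewrite mulr1 /mass le_eqVlt; apply/orP; left; apply/eqP; apply: eq_bigr => i _.
    by rewrite (spanning_tree_realized i tree sub) mulr1.
  by rewrite mulr0; apply: prodr_ge0 => i _; rewrite mulr_ge0 ?ler0n.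
rewrite -(bigA_distr_bigA (fun i o => h i o * (o != Some (copy i))%:R)) /=.
apply: ler_prod => i _.
rewrite sumr_ge0 => [|o _]; last by rewrite mulr_ge0 ?ler0n.
apply: le_trans (rung_potential_ge i (~~ copy i) h_ge0).
by rewrite sum_option; case: (copy i) => /=; rewrite !mulr1 !mulr0 ?addr0 ?add0r lexx.
Qed.

Lemma wsuccess_coin q a c h :
  wsuccess (Coin q a c) h = clamp01 q * wsuccess a h + (1 - clamp01 q) * wsuccess c h.
Proof.
rewrite /wsuccess !mulr_sumr -big_split; apply: eq_bigr => s _ /=.
by rewrite RplusE !RmultE RminusE (IZR_natE 1); ring.
Qed.

Lemma wsuccess_query_rung i b a c h :
  wsuccess (Query (inl (i, b)) a c) h
  = wsuccess a (rescale h i (pr_yes b)) + wsuccess c (rescale h i (pr_no b)).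
Proof.
rewrite /wsuccess -big_split; apply: eq_bigr => s _ /=.
rewrite !mass_rescale inE /pr_yes /pr_no.
case: (s i == Some b) => /=; last by ring.
by rewrite RplusE !RmultE RminusE (IZR_natE 1); ring.
Qed.

Lemma wsuccess_query_loop z a c h : wsuccess (Query (inr z) a c) h = wsuccess a h.
Proof. by rewrite /wsuccess; apply: eq_bigr => s _ /=; rewrite inE. Qed.

Lemma wsuccess_query_cost0 e a c h :
  (forall s, mass h s != 0 -> (query_cost (realized r s) (Query e a c) <= 0)%N) ->
  wsuccess (Query e a c) h = 0.
Proof.
move=> cost0; rewrite /wsuccess big1 // => s _.
have [-> | /cost0] := eqVneq (mass h s) 0; first by rewrite mul0r.
by rewrite leqn0 (gtn_eqF (leq_ltn_trans (leq0n _) (query_cost_queryl _ _ _ e))).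
Qed.

Lemma wsuccess_ge A h (x : R) : (forall j o, 0 <= h j o) ->
  (forall s, x <= success_prob (@dpath_ends n r) p (realized r s) A) ->
  x * \prod_(i < n) \sum_o h i o <= wsuccess A h.
Proof.
move=> h_ge0 succ; rewrite bigA_distr_bigA mulr_sumr; apply: ler_sum => s _.
by rewrite mulrC ler_wpM2l ?succ //; apply: prodr_ge0 => i _.
Qed.

(* The cost is only bounded on realizations of positive weight: after the
   answer "No" the weight vanishes wherever the queried copy is present, and
   there the branch taken on "No" is never run. *)
Lemma wsuccess_le (A : alg (dpathE n r)) h d : (forall j o, 0 <= h j o) ->
  (forall s, mass h s != 0 -> (query_cost (realized r s) A <= d)%N) ->
  wsuccess A h <= (1 + th * (1 - ln p)) ^+ d * \prod_(i < n) rung_potential h i.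
Proof.
have lam_ge1 : 1 <= 1 + th * (1 - ln p).
  by rewrite lerDl mulr_ge0 ?ltW //; have := ln_lt0 p_gt0 p_lt1; lra.
elim: A h d => [T|q a IHa c IHc|e a IHa c IHc] h d h_ge0 cost_le.
- apply: le_trans (wsuccess_out T h_ge0) _.
  apply: ler_peMl; last exact: exprn_ege1.
  exact: prod_rung_potential_ge0.
- rewrite wsuccess_coin; apply: convex_comb_le (clamp01_ge0 q) (clamp01_le1 q) _ _ => [q_gt0|q_lt1].
    by apply: IHa => // s /cost_le; apply: leq_trans (query_cost_coinl _ _ _ q_gt0).
  by apply: IHc => // s /cost_le; apply: leq_trans (query_cost_coinr _ _ _ q_lt1).
case: d cost_le => [|d] cost_le.
  by rewrite (wsuccess_query_cost0 cost_le) expr0 mul1r prod_rung_potential_ge0.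
have lam_ge0 : 0 <= (1 + th * (1 - ln p)) ^+ d by rewrite exprn_ge0 // (le_trans ler01).
case: e cost_le => [[i b]|z] cost_le; last first.
  rewrite wsuccess_query_loop; apply: le_trans (IHa h d h_ge0 _) _ => [s /cost_le cost_s|].
    by rewrite -ltnS; exact: leq_trans (query_cost_queryl _ _ _ _) cost_s.
  rewrite exprS -mulrA; apply: ler_peMl lam_ge1.
  by rewrite mulr_ge0 ?prod_rung_potential_ge0.
have yes_ge0 o : 0 <= pr_yes b o by rewrite /pr_yes; case: ifP => _; rewrite ?ler01 ?ltW.
have no_ge0 o : 0 <= pr_no b o by rewrite /pr_no; case: ifP => _; rewrite ?lexx ?subr_ge0 ?ltW.
rewrite wsuccess_query_rung exprSr -mulrA.
apply: le_trans _ (ler_wpM2l lam_ge0 (prod_rung_potential_query i b h_ge0)).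
rewrite mulrDr; apply: lerD.
  apply: IHa => [|s /mass_rescale_neq0[/cost_le cost_s _]]; first exact: rescale_ge0.
  by rewrite -ltnS; exact: leq_trans (query_cost_queryl _ _ _ _) cost_s.
apply: IHc => [|s /mass_rescale_neq0[/cost_le cost_s]]; first exact: rescale_ge0.
rewrite /pr_no; case: ifP => [/eqP si_b _|_]; last by rewrite eqxx.
have unrealized : inl (i, b) \notin realized r s by rewrite inE si_b eqxx.
by rewrite -ltnS; exact: leq_trans (query_cost_queryr _ _ unrealized) cost_s.
Qed.

End WeightedSuccess.

Lemma ln_gt6 (N : R) : 2 ^+ 12 <= N -> 6 < ln N.
Proof.
move=> N_ge; have two_gt0 : 0 < 2 :> R by rewrite ltr0Sn.
have ln2 : 2^-1 < ln 2 by have := ln_lt_2; rewrite (IZR_natE 2) RinvE => /RltP.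
by have := ln_le (exprn_gt0 12 two_gt0) N_ge; rewrite lnX //; lra.
Qed.

Lemma mul_ln_le (M N : R) : 3 <= N -> 1 <= M -> M <= 2 * N + 1 ->
  M * ln M <= 6 * (N * ln N).
Proof.
move=> N_ge3 M_ge1 M_le; have N_gt0 : 0 < N by apply: lt_le_trans N_ge3.
have M_le_sq : M <= N * N by nra.
have := ln_le (lt_le_trans ltr01 M_ge1) M_le_sq; rewrite lnM // => lnM_le.
have M_le3 : M <= 3 * N by lra.
have := ler_pM (le_trans ler01 M_ge1) (ln_ge0 M_ge1) M_le3 lnM_le; lra.
Qed.

Lemma growth_potential_lt_half (p : R) (n m d : nat) :
  0 < p -> p < 1 -> (2 ^ 12 <= n)%N -> (0 < m <= n.*2.+1)%N ->
  d%:R < (24 * (1 - ln p))^-1 * m%:R * ln m%:R ->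
  (1 + (2 * n%:R)^-1 * (1 - ln p)) ^+ d * potential (2 * n%:R)^-1 4^-1 4^-1 2^-1 ^+ n
  < 2^-1.
Proof.
move=> p_gt0 p_lt1 n_ge /andP[m_gt0 m_le] d_lt.
set N := n%:R; set L := ln N; set c := 1 - ln p; set th := (2 * N)^-1.
have c_gt0 : 0 < c by have := ln_lt0 p_gt0 p_lt1; rewrite /c; lra.
have N_ge : 2 ^+ 12 <= N by rewrite /N -natrX ler_nat.
have N_gt1 : 1 < N by apply: lt_le_trans N_ge; rewrite -natrX ltr1n.
have L_gt6 : 6 < L := ln_gt6 N_ge.
have L_le : 1 + L <= N by have := ln_le_sub1 (lt_trans ltr01 N_gt1); rewrite -/L; lra.
have th_gt0 : 0 < th by rewrite invr_gt0 mulr_gt0 // (lt_trans ltr01).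
have growth_exp : th * c * d%:R < L / 8.
  have := d_lt; rewrite -(ltr_pM2l (mulr_gt0 th_gt0 c_gt0)) => /lt_le_trans; apply.
  rewrite (_ : th * c * _ = m%:R * ln m%:R / (48 * N)); last first.
    by rewrite /th /c; field; rewrite ?mulf_neq0 ?gt_eqF // (lt_trans ltr01).
  rewrite ler_pdivrMr ?mulr_gt0 ?ltr0Sn ?(lt_trans ltr01) //.
  have M_le : m%:R <= 2 * N + 1 :> R.
    by move: m_le; rewrite -(ler_nat R) -addn1 -muln2 natrD natrM mulrC.
  have N_ge3 : 3 <= N by apply: le_trans N_ge; rewrite -natrX ler_nat.
  have M_ge1 : 1 <= m%:R :> R by rewrite ler1n.
  by have := mul_ln_le N_ge3 M_ge1 M_le; rewrite -/L; lra.
set x := (1 + L) / (4 * N).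
have x_le1 : x <= 1 by rewrite /x ler_pdivrMr ?mulr_gt0 ?ltr0Sn ?(lt_trans ltr01) //; lra.
have decay_exp : - x * n%:R = - (1 + L) / 4.
  by rewrite /x -/N; field; rewrite gt_eqF // (lt_trans ltr01).
rewrite potential_uniform // -/L -/x.
apply: le_lt_trans (_ : exp (th * c * d%:R) * exp (- x * n%:R) < 2^-1).
  have thc_ge0 : 0 <= th * c by rewrite mulr_ge0 ?ltW.
  by apply: ler_pM; [ apply: exprn_ge0 | apply: exprn_ge0
                    | apply: powD1_le_exp | apply: powD1_le_exp ]; lra.
rewrite expRD RplusE decay_exp; apply: exp_lt_half; lra.
Qed.

Lemma query_lower_bound (p : R) (n r : nat) (A : alg (dpathE n r)) :
  0 < p -> p < 1 -> (2 ^ 12 <= n)%N -> (r <= 1)%N ->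
  (forall s, 2^-1 <= success_prob (@dpath_ends n r) p (realized r s) A) ->
  exists s, (24 * (1 - ln p))^-1 * (n.*2 + r)%:R * ln (n.*2 + r)%:R
            <= (query_cost (realized r s) A)%:R.
Proof.
move=> p_gt0 p_lt1 n_ge r_le1 succ.
pose cost s := query_cost (realized r s) A.
have [s0 cost_max] : exists s0, forall s, (cost s <= cost s0)%N.
  by exists [arg max_(s > [ffun=> None]) cost s] => s; case: arg_maxnP => // s1 _; apply.
exists s0; rewrite leNgt; apply/negP => cost_lt.
have n_gt0 : (0 < n)%N by apply: leq_trans n_ge.
have th_gt0 : 0 < (2 * n%:R)^-1 :> R by rewrite invr_gt0 mulr_gt0 ?ltr0n.
pose h0 (i : 'I_n) (o : option bool) : R := if o is Some _ then 4^-1 else 2^-1.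
have h0_ge0 i o : 0 <= h0 i o by rewrite /h0; case: o => [_|]; rewrite invr_ge0 ler0n.
have upper := wsuccess_le p_gt0 p_lt1 th_gt0 h0_ge0 (fun s _ => cost_max s).
rewrite (eq_bigr (fun=> potential (2 * n%:R)^-1 4^-1 4^-1 2^-1)) // prodr_const card_ord in upper.
have lower : 2^-1 <= wsuccess p A h0.
  apply: le_trans (wsuccess_ge h0_ge0 succ); rewrite big1 ?mulr1 // => i _.
  by rewrite sum_option /h0; lra.
have m_bounds : (0 < n.*2 + r <= n.*2.+1)%N.
  by rewrite addn_gt0 double_gt0 n_gt0 /= -[n.*2.+1]addn1 leq_add2l.
have := growth_potential_lt_half p_gt0 p_lt1 n_ge m_bounds cost_lt.
by move/lt_le_trans/(_ (le_trans lower upper)); rewrite ltxx.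
Qed.

Theorem lemma8 :
  forall p : R, (0 < p)%R -> (p < 1 / 2)%R ->
  exists delta c : R, (0 < delta)%R /\ (0 < c)%R /\
  exists m0 : nat, forall m : nat, (m0 <= m)%N ->
    exists (V E : finType) (ends : E -> V * V),
      #|E| = m /\
      forall A : alg E,
        (forall Rz : {set E}, admissible_realization ends Rz ->
           (1 - delta <= success_prob ends p Rz A)%R) ->
        exists Rz : {set E}, admissible_realization ends Rz /\
          (c * INR m * ln (INR m) <= INR (query_cost Rz A))%R.
Proof.
move=> p /RltP p_gt0 /RltP; rewrite RdivE (IZR_natE 1) (IZR_natE 2) => p_lt_half.
have p_lt1 : p < 1 by lra.
have c_gt0 : 0 < 1 - ln p by have := ln_lt0 p_gt0 p_lt1; lra.
exists 2^-1, (24 * (1 - ln p))^-1.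
split; first by apply/RltP; rewrite invr_gt0 ltr0n.
split; first by apply/RltP; rewrite invr_gt0 mulr_gt0 ?ltr0n.
exists (2 ^ 13)%N => m m_ge.
have m_eq : (m = m./2.*2 + odd m)%N by rewrite addnC odd_double_half.
exists (dpathV m./2), (dpathE m./2 (odd m)), (@dpath_ends m./2 (odd m)).
split; first by rewrite card_dpathE -m_eq.
move=> A succ.
have n_ge : (2 ^ 12 <= m./2)%N by rewrite (_ : 2 ^ 12 = (2 ^ 13)./2)%N // half_leq.
have succ_half s : 2^-1 <= success_prob (@dpath_ends _ _) p (realized (odd m) s) A.
  by have := succ _ (realized_admissible _ s); rewrite RminusE => /RleP; lra.
have [s cost_ge] := query_lower_bound p_gt0 p_lt1 n_ge (leq_b1 _) succ_half.
exists (realized _ s); split; first exact: realized_admissible.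
by apply/RleP; rewrite !RmultE !INRE -m_eq in cost_ge *.
Qed.
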